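(* Let $\mathcal A\in\mathbb R^{N\times N}$ be Hurwitz and $U\in\mathbb R^{N\times N}$ be such that the unique solution $V$ of the algebraic Lyapunov equation $\mathcal AV+V\mathcal A^T+U=0$ is nonsingular. Then, with $G(s):=(sI_N-\mathcal A)^{-1}$, $$G(i\lambda)\,U\,G(i\lambda)^*=V\,G(i\lambda)^*\,V^{-1}UV^{-1}\,G(i\lambda)\,V\qquad\text{for all }\lambda\in\mathbb R .$$
   Context: $(\cdot)^*$ denotes the conjugate transpose. *)

From HB Require Import structures.
From mathcomp Require Import all_boot all_order all_algebra.
From mathcomp Require Import complex.
From mathcomp Require Import reals.
Set Implicit Arguments. Unset Strict Implicit. Unset Printing Implicit Defensive.
Import Order.TTheory GRing.Theory Num.Theory.
Local Open Scope ring_scope.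
Local Open Scope complex_scope.

Definition cplx_mx (R : rcfType) (m n : nat) (M : 'M[R]_(m, n)) : 'M[R[i]]_(m, n) :=
  map_mx (fun x : R => x%:C) M.

Definition ctrmx (R : rcfType) (m n : nat) (M : 'M[R[i]]_(m, n)) : 'M[R[i]]_(n, m) :=
  (map_mx (@conjc R) M)^T.

Definition hurwitz (R : rcfType) (N : nat) (A : 'M[R]_N) : Prop :=
  forall z : R[i], eigenvalue (cplx_mx A) z -> complex.Re z < 0.

Definition tfG (R : rcfType) (N : nat) (A : 'M[R]_N) (s : R[i]) : 'M[R[i]]_N :=
  invmx (s%:M - cplx_mx A).

From HB Require Import structures.
From mathcomp Require Import all_boot all_order all_algebra complex reals.
Import Order.TTheory GRing.Theory Num.Theory.
Local Open Scope ring_scope.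
Local Open Scope complex_scope.
Set Implicit Arguments. Unset Strict Implicit.

(* Fix s = i*lambda and put M := s I - A, so that G(s) = M^{-1} and, A being
   real, M^* = -s I - A^T.  Since A is Hurwitz, s is not an eigenvalue of A
   and M is invertible.  The Lyapunov equation rewrites as
         U = -(A V + V A^T) = M V + V M^*,
   because the two scalar terms s V and -s V cancel.  The theorem is then an
   instance of a purely algebraic fact about invertible M, M', V over any
   commutative ring: for W := M V + V M',
         M^{-1} W M'^{-1}  =  V M'^{-1} + M^{-1} V
                           =  V M'^{-1} V^{-1} W V^{-1} M^{-1} V. *)

Section Sandwich.
Variables (K : comUnitRingType) (n : nat) (M M' V : 'M[K]_n).
Hypotheses (unitM : M \in unitmx) (unitM' : M' \in unitmx) (unitV : V \in unitmx).

Lemma sandwich_inv :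
  invmx M *m (M *m V + V *m M') *m invmx M' = V *m invmx M' + invmx M *m V.
Proof.
rewrite mulmxDr mulmxDl !mulmxA mulVmx // mul1mx.
by rewrite -!mulmxA mulmxV // mulmx1 addrC.
Qed.

Lemma sandwich_conj :
  V *m invmx M' *m invmx V *m (M *m V + V *m M') *m invmx V *m invmx M *m V
  = V *m invmx M' + invmx M *m V.
Proof.
rewrite -!mulmxA mulmxDl !mulmxDr -!mulmxA.
rewrite !(mulmxA V (invmx V)) !(mulmxA (invmx V) V) mulmxV // mulVmx // !mul1mx.
rewrite !(mulmxA M (invmx M)) !(mulmxA (invmx M') M') mulmxV // mulVmx // !mul1mx.
by rewrite mulVmx // mulmx1 mulmxA mulmxV // mul1mx.
Qed.

Lemma sandwich_identity :
  invmx M *m (M *m V + V *m M') *m invmx M'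
  = V *m invmx M' *m invmx V *m (M *m V + V *m M') *m invmx V *m invmx M *m V.
Proof. by rewrite sandwich_inv sandwich_conj. Qed.

End Sandwich.

Lemma cplx_mx_inv (R : rcfType) (n : nat) (V : 'M[R]_n) :
  cplx_mx (invmx V) = invmx (cplx_mx V).
Proof. exact: (map_invmx (real_complex R)). Qed.

Lemma cplx_mx_unit (R : rcfType) (n : nat) (V : 'M[R]_n) :
  (cplx_mx V \in unitmx) = (V \in unitmx).
Proof. exact: (map_unitmx (real_complex R)). Qed.

Lemma ctrmx_inv (R : rcfType) (n : nat) (M : 'M[R[i]]_n) :
  ctrmx (invmx M) = invmx (ctrmx M).
Proof. by rewrite /ctrmx map_invmx trmx_inv. Qed.

Lemma ctrmx_unit (R : rcfType) (n : nat) (M : 'M[R[i]]_n) :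
  (ctrmx M \in unitmx) = (M \in unitmx).
Proof. by rewrite /ctrmx unitmx_tr map_unitmx. Qed.

Lemma conj_cplx_mx (R : rcfType) (n : nat) (X : 'M[R]_n) :
  map_mx (@conjc R) (cplx_mx X) = cplx_mx X.
Proof. by apply/matrixP=> i j; rewrite !mxE conjc_real. Qed.

Lemma ctrmx_resolvent (R : rcfType) (n : nat) (A : 'M[R]_n) (lambda : R) :
  ctrmx ((lambda *i)%:M - cplx_mx A) = (- lambda *i)%:M - (cplx_mx A)^T.
Proof.
rewrite /ctrmx map_mxB conj_cplx_mx map_scalar_mx raddfB /= tr_scalar_mx.
by congr (_%:M - _); apply/eqP; rewrite eq_complex /= oppr0 !eqxx.
Qed.

Lemma hurwitz_resolvent_unit (R : rcfType) (n : nat) (A : 'M[R]_n) (lambda : R) :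
  hurwitz A -> (lambda *i)%:M - cplx_mx A \in unitmx.
Proof.
move=> hA; apply: contraT => not_unit.
have : eigenvalue (cplx_mx A) (lambda *i).
  rewrite /eigenvalue /eigenspace kermx_eq0 row_free_unit.
  by rewrite -opprB -scaleN1r unitmxZ ?unitrN1.
by move/hA; rewrite ltxx.
Qed.

Lemma lyapunov_resolvent (R : rcfType) (n : nat) (A U V : 'M[R]_n) (lambda : R) :
  A *m V + V *m A^T + U = 0 ->
  let M := (lambda *i)%:M - cplx_mx A in
  cplx_mx U = M *m cplx_mx V + cplx_mx V *m ctrmx M.
Proof.
move=> lyap M; rewrite /M ctrmx_resolvent.
have -> : U = - (A *m V + V *m A^T) by apply/eqP; rewrite -addr_eq0 addrC lyap.
rewrite /cplx_mx map_mxN map_mxD !map_mxM map_trmx -/(cplx_mx A) -/(cplx_mx V).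
rewrite mulmxBl mulmxBr mul_scalar_mx mul_mx_scalar scaleNr opprD.
by rewrite addrACA subrr add0r addrC.
Qed.

Theorem lemma7p2 (R : realType) (N : nat) (A U V : 'M[R]_N) :
  hurwitz A ->
  A *m V + V *m A^T + U = 0 ->
  V \in unitmx ->
  forall lambda : R,
    let G := tfG A (lambda *i) in
    G *m cplx_mx U *m ctrmx G =
    cplx_mx V *m ctrmx G *m cplx_mx (invmx V) *m cplx_mx U
      *m cplx_mx (invmx V) *m G *m cplx_mx V.
Proof.
move=> hA lyap unitV lambda G.
set M := (lambda *i)%:M - cplx_mx A.
have unitM : M \in unitmx by exact: hurwitz_resolvent_unit.
rewrite /G /tfG -/M ctrmx_inv cplx_mx_inv.
have -> : cplx_mx U = M *m cplx_mx V + cplx_mx V *m ctrmx M.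
  exact: lyapunov_resolvent.
have unitM' : ctrmx M \in unitmx by rewrite ctrmx_unit.
have unitVc : cplx_mx V \in unitmx by rewrite cplx_mx_unit.
exact: sandwich_identity unitM unitM' unitVc.
Qed.
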